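(* Let $G=\langle c,d\mid c^2=d^3\rangle$ be the fundamental group of the complement of the $(2,3)$-torus knot (trefoil) in $S^3$. If $\alpha,\beta\in G$ are conjugate in $G$ and $G=\langle\alpha,\beta\rangle$, then $\alpha$ and $\beta$ are peripheral.
   Context: An element of a knot group $\pi_1(S^3\smallsetminus K)$ is peripheral if it lies in a conjugate of the peripheral subgroup, i.e. the image of $\pi_1$ of the boundary torus of the knot exterior. *)

Record group (T : Type) : Type := Group {
  gmul : T -> T -> T;
  ginv : T -> T;
  gone : T;
  gmulA : forall x y z, gmul x (gmul y z) = gmul (gmul x y) z;
  gmul1g : forall x, gmul gone x = x;
  gmulVg : forall x, gmul (ginv x) x = gone
}.
Arguments gmul {T} _ _ _.
Arguments ginv {T} _ _.
Arguments gone {T} _.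

Definition is_hom {G H : Type} (SG : group G) (SH : group H) (f : G -> H) : Prop :=
  forall x y, f (gmul SG x y) = gmul SH (f x) (f y).

Definition trefoil_presentation {G : Type} (SG : group G) (c d : G) : Prop :=
  gmul SG c c = gmul SG d (gmul SG d d) /\
  forall (H : Type) (SH : group H) (h1 h2 : H),
    gmul SH h1 h1 = gmul SH h2 (gmul SH h2 h2) ->
    (exists f : G -> H, is_hom SG SH f /\ f c = h1 /\ f d = h2) /\
    (forall f g : G -> H, is_hom SG SH f -> is_hom SG SH g ->
       f c = g c -> f d = g d -> forall x, f x = g x).

Inductive in_gen {G : Type} (SG : group G) (a b : G) : G -> Prop :=
  | gen_one : in_gen SG a b (gone SG)
  | gen_a : in_gen SG a b a
  | gen_b : in_gen SG a b b
  | gen_mul : forall x y, in_gen SG a b x -> in_gen SG a b y ->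
              in_gen SG a b (gmul SG x y)
  | gen_inv : forall x, in_gen SG a b x -> in_gen SG a b (ginv SG x).

Definition generates {G : Type} (SG : group G) (a b : G) : Prop :=
  forall x, in_gen SG a b x.

Definition conjugate {G : Type} (SG : group G) (x y : G) : Prop :=
  exists g, y = gmul SG (gmul SG g x) (ginv SG g).

(* For the trefoil with c = aba, d = ab (Wirtinger generators a, b), the
   meridian is a = d^-1 c and the (Seifert) longitude is c^2 * meridian^-6. *)
Definition meridian {G : Type} (SG : group G) (c d : G) : G :=
  gmul SG (ginv SG d) c.

Fixpoint npow {G : Type} (SG : group G) (n : nat) (x : G) : G :=
  match n with
  | O => gone SG
  | S n => gmul SG x (npow SG n x)
  end.

Definition longitude {G : Type} (SG : group G) (c d : G) : G :=
  gmul SG (gmul SG c c) (ginv SG (npow SG 6 (meridian SG c d))).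

(* peripheral subgroup = <meridian, longitude> = image of pi_1 of the
   boundary torus; an element is peripheral if it lies in a conjugate of it *)
Definition peripheral {G : Type} (SG : group G) (c d : G) (x : G) : Prop :=
  exists g y, in_gen SG (meridian SG c d) (longitude SG c d) y /\
              x = gmul SG (gmul SG g y) (ginv SG g).

(* The representation [rho : c |-> [[0,-1],[1,0]], d |-> [[1,-1],[1,0]]] of G into
   SL(2,Z) drives both halves of the argument.

   Conjugate generators are parabolic.  If alpha and beta generate G, then rho(G) lies in
   the Z-span of 1, A, B, AB (A = rho alpha, B = rho beta), and the determinant of the
   bracket XY - YX of two elements of this span is a multiple of det(AB - BA).  Since the
   bracket of rho c and rho d has determinant -1, det(AB - BA) = +-1.  When tr A = tr B = t
   and s = tr AB this determinant equals (2 - s)(s + 2 - t^2), which forces t^2 = 4.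

   Parabolic elements are peripheral.  With z = c^2 central, every element has a normal
   form z^k d^j W c^e, W a word in the blocks cd and cd^2.  Conjugating a trailing c or a
   leading d^j around the word merges it into a neighbouring block, so cyclic reduction
   leaves a central element times W.  If W uses both blocks, rho W is +- a product of
   [[1,-1],[0,1]] and [[1,0],[-1,1]] involving both, and such a product has trace >= 3.
   Otherwise W lies in <mu, lambda>, because cd = z mu^-1 and z = lambda mu^6, or is
   conjugate into it by c, because cd^2 = c (z mu) c^-1. *)

From Stdlib Require Import ZArith Lia List ProofIrrelevance.
Import ListNotations.
Open Scope Z_scope.

Arguments gmulA {T} _ _ _ _.
Arguments gmul1g {T} _ _.
Arguments gmulVg {T} _ _.

Declare Scope group_scope.

Section GroupFacts.
Context {T : Type} (S : group T).
Local Notation "x * y" := (gmul S x y) : group_scope.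
Local Notation "x ^-1" := (ginv S x) (at level 3) : group_scope.
Local Notation one := (gone S).
Local Open Scope group_scope.

Lemma gmulgV x : x * x^-1 = one.
Proof.
  transitivity ((x^-1^-1 * x^-1) * (x * x^-1)).
  - rewrite gmulVg, gmul1g. reflexivity.
  - rewrite <- gmulA, (gmulA S x^-1 x), gmulVg, gmul1g. apply gmulVg.
Qed.

Lemma gmulg1 x : x * one = x.
Proof. rewrite <- (gmulVg S x), gmulA, gmulgV, gmul1g. reflexivity. Qed.

Lemma gmulKg x y : x^-1 * (x * y) = y.
Proof. rewrite gmulA, gmulVg, gmul1g. reflexivity. Qed.

Lemma gmulKVg x y : x * (x^-1 * y) = y.
Proof. rewrite gmulA, gmulgV, gmul1g. reflexivity. Qed.

Lemma ginv_unique x y : y * x = one -> y = x^-1.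
Proof. intros E. rewrite <- (gmulg1 y), <- (gmulgV x), gmulA, E, gmul1g. reflexivity. Qed.

Lemma ginvM x y : (x * y)^-1 = y^-1 * x^-1.
Proof.
  symmetry. apply ginv_unique.
  rewrite <- gmulA, gmulKg, gmulVg. reflexivity.
Qed.

Lemma ginvK x : x^-1^-1 = x.
Proof. symmetry. apply ginv_unique, gmulgV. Qed.

Lemma ginv1 : one^-1 = one.
Proof. symmetry. apply ginv_unique, gmul1g. Qed.

Lemma commuteV a b : a * b = b * a -> a * b^-1 = b^-1 * a.
Proof.
  intros E. rewrite <- (gmulKg b (a * b^-1)), (gmulA S b a), <- E, <- gmulA, gmulgV, gmulg1.
  reflexivity.
Qed.

Lemma commuteM a x y : a * x = x * a -> a * y = y * a -> a * (x * y) = (x * y) * a.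
Proof. intros Ex Ey. rewrite gmulA, Ex, <- gmulA, Ey, gmulA. reflexivity. Qed.

End GroupFacts.

Ltac gassoc := repeat rewrite <- gmulA; repeat (rewrite gmul1g || rewrite gmulg1).

Section Homomorphisms.
Context {G H : Type} (SG : group G) (SH : group H) (f : G -> H) (hf : is_hom SG SH f).

Lemma is_hom1 : f (gone SG) = gone SH.
Proof.
  transitivity (gmul SH (ginv SH (f (gone SG))) (gmul SH (f (gone SG)) (f (gone SG)))).
  - rewrite gmulKg. reflexivity.
  - rewrite <- hf, gmul1g. apply gmulVg.
Qed.

Lemma is_homV x : f (ginv SG x) = ginv SH (f x).
Proof. apply ginv_unique. rewrite <- hf, gmulVg. exact is_hom1. Qed.
End Homomorphisms.

Section Generation.
Context {G : Type} (SG : group G).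

Lemma in_gen_sym a b x : in_gen SG a b x -> in_gen SG b a x.
Proof. induction 1; eauto using in_gen. Qed.

Lemma generates_sym a b : generates SG a b -> generates SG b a.
Proof. intros hab x. apply in_gen_sym, hab. Qed.

Lemma conjugate_sym x y : conjugate SG x y -> conjugate SG y x.
Proof.
  intros [g ->]. exists (ginv SG g).
  rewrite ginvK, <- !gmulA, gmulKg, gmulVg, gmulg1. reflexivity.
Qed.

Definition gen_subgroup (a b : G) : group {x : G | in_gen SG a b x}.
Proof.
  refine (Group _
    (fun x y => exist _ (gmul SG (proj1_sig x) (proj1_sig y))
                  (gen_mul _ _ _ _ _ (proj2_sig x) (proj2_sig y)))
    (fun x => exist _ (ginv SG (proj1_sig x)) (gen_inv _ _ _ _ (proj2_sig x)))
    (exist _ (gone SG) (gen_one _ _ _)) _ _ _);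
  intros; apply eq_sig_hprop; auto using proof_irrelevance; cbn.
  - apply gmulA.
  - apply gmul1g.
  - apply gmulVg.
Defined.

Lemma trefoil_generates c d : trefoil_presentation SG c d -> generates SG c d.
Proof.
  intros [hrel hU] x.
  destruct (hU _ (gen_subgroup c d) (exist _ c (gen_a _ _ _)) (exist _ d (gen_b _ _ _)))
    as [[f [hf [fc fd]]] _].
  { apply eq_sig_hprop; auto using proof_irrelevance. }
  destruct (hU _ SG c d hrel) as [_ huniq].
  rewrite (huniq (fun x => x) (fun x => proj1_sig (f x))).
  - apply proj2_sig.
  - intros a b. reflexivity.
  - intros a b. rewrite hf. reflexivity.
  - rewrite fc. reflexivity.
  - rewrite fd. reflexivity.
Qed.

End Generation.

Record mat := Mat { e11 : Z; e12 : Z; e21 : Z; e22 : Z }.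

Definition mmul (A B : mat) : mat :=
  Mat (e11 A * e11 B + e12 A * e21 B) (e11 A * e12 B + e12 A * e22 B)
      (e21 A * e11 B + e22 A * e21 B) (e21 A * e12 B + e22 A * e22 B).
Definition madj (A : mat) : mat := Mat (e22 A) (- e12 A) (- e21 A) (e11 A).
Definition mopp (A : mat) : mat := Mat (- e11 A) (- e12 A) (- e21 A) (- e22 A).
Definition mdet (A : mat) : Z := e11 A * e22 A - e12 A * e21 A.
Definition mtr (A : mat) : Z := e11 A + e22 A.
Definition mI : mat := Mat 1 0 0 1.

Definition mbracket (A B : mat) : mat :=
  let P := mmul A B in let Q := mmul B A in
  Mat (e11 P - e11 Q) (e12 P - e12 Q) (e21 P - e21 Q) (e22 P - e22 Q).

(* [mspan A B x0 x1 x2 x3 = x0 + x1 A + x2 B + x3 AB]. *)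
Definition mspan (A B : mat) (x0 x1 x2 x3 : Z) : mat :=
  let C := mmul A B in
  Mat (x0 + x1 * e11 A + x2 * e11 B + x3 * e11 C) (x1 * e12 A + x2 * e12 B + x3 * e12 C)
      (x1 * e21 A + x2 * e21 B + x3 * e21 C) (x0 + x1 * e22 A + x2 * e22 B + x3 * e22 C).

Definition in_mspan (A B X : mat) : Prop :=
  exists x0 x1 x2 x3, X = mspan A B x0 x1 x2 x3.

Definition parabolic (X : mat) : Prop := mtr X * mtr X = 4.

Ltac mat_unfold :=
  repeat match goal with X : mat |- _ => destruct X end;
  unfold mbracket, mspan in *; cbv zeta in *;
  unfold mmul, madj, mopp, mdet, mtr, mI in *; cbn [e11 e12 e21 e22] in *.

Lemma mdet_mul A B : mdet (mmul A B) = mdet A * mdet B.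
Proof. mat_unfold. ring. Qed.

Lemma mdet_adj A : mdet (madj A) = mdet A.
Proof. mat_unfold. ring. Qed.

Lemma mtr_mul_adj X H : mtr (mmul (mmul X H) (madj H)) = mdet H * mtr X.
Proof. mat_unfold. ring. Qed.

Lemma mtr_conj_adj X H : mtr (mmul (mmul H X) (madj H)) = mdet H * mtr X.
Proof. mat_unfold. ring. Qed.

Lemma mtr_conj X Y H : mdet H = 1 -> mmul Y H = mmul H X -> mtr Y = mtr X.
Proof.
  intros hH E.
  rewrite <- (Z.mul_1_l (mtr Y)), <- hH, <- mtr_mul_adj, E, mtr_conj_adj, hH.
  apply Z.mul_1_l.
Qed.

Lemma parabolic_opp X : parabolic (mopp X) <-> parabolic X.
Proof. unfold parabolic. mat_unfold. split; intros E; rewrite <- E; ring. Qed.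

Definition SL2Z := {A : mat | mdet A = 1}.

Lemma SL2Z_eq (X Y : SL2Z) : proj1_sig X = proj1_sig Y -> X = Y.
Proof. intros E. apply eq_sig_hprop; auto using proof_irrelevance. Qed.

Definition SL2Z_group : group SL2Z.
Proof.
  refine (Group SL2Z
    (fun X Y => exist _ (mmul (proj1_sig X) (proj1_sig Y))
                  (eq_trans (mdet_mul _ _) (f_equal2 Z.mul (proj2_sig X) (proj2_sig Y))))
    (fun X => exist _ (madj (proj1_sig X)) (eq_trans (mdet_adj _) (proj2_sig X)))
    (exist _ mI eq_refl) _ _ _);
  intros; apply SL2Z_eq;
  repeat match goal with X : SL2Z |- _ => destruct X end; cbn; mat_unfold; f_equal; lia.
Defined.

Lemma in_mspan1 A B : in_mspan A B mI.
Proof. exists 1, 0, 0, 0. mat_unfold. f_equal; ring. Qed.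

Lemma in_mspan_l A B : in_mspan A B A.
Proof. exists 0, 1, 0, 0. mat_unfold. f_equal; ring. Qed.

Lemma in_mspan_r A B : in_mspan A B B.
Proof. exists 0, 0, 1, 0. mat_unfold. f_equal; ring. Qed.

(* The coefficients come from Cayley-Hamilton for A and B and from
   BA = (tr AB - tr A tr B) + tr B A + tr A B - AB. *)
Lemma in_mspan_mul A B X Y : in_mspan A B X -> in_mspan A B Y -> in_mspan A B (mmul X Y).
Proof.
  intros (x0 & x1 & x2 & x3 & ->) (y0 & y1 & y2 & y3 & ->).
  set (tA := mtr A); set (tB := mtr B); set (s := mtr (mmul A B)).
  set (dA := mdet A); set (dB := mdet B).
  exists (x0*y0 - x1*y1*dA + x2*y1*(s - tA*tB) - x2*y2*dB - x2*y3*tA*dB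
          - x3*y1*tB*dA - x3*y3*dA*dB),
         (x0*y1 + x1*y0 + x1*y1*tA + x2*y1*tB + x2*y3*dB + x3*y1*s - x3*y2*dB),
         (x0*y2 + x2*y0 + x2*y1*tA + x2*y2*tB - x1*y3*dA + x2*y3*s + x3*y1*dA),
         (x0*y3 + x3*y0 + x1*y2 + x1*y3*tA - x2*y1 + x3*y2*tB + x3*y3*s).
  unfold tA, tB, s, dA, dB; clear tA tB s dA dB. mat_unfold. f_equal; ring.
Qed.

Lemma in_mspan_adj A B X : in_mspan A B X -> in_mspan A B (madj X).
Proof.
  intros (x0 & x1 & x2 & x3 & ->).
  exists (mtr (mspan A B x0 x1 x2 x3) - x0), (- x1), (- x2), (- x3).
  mat_unfold. f_equal; ring.
Qed.

Lemma mdet_bracket_mspan A B X Y : in_mspan A B X -> in_mspan A B Y ->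
  exists q, mdet (mbracket X Y) = mdet (mbracket A B) * q.
Proof.
  intros (x0 & x1 & x2 & x3 & ->) (y0 & y1 & y2 & y3 & ->).
  set (p := x1*y2 - x2*y1); set (q := x1*y3 - x3*y1); set (r := x2*y3 - x3*y2).
  set (P := Mat (p + q * e11 A) (q * e12 A) (q * e21 A) (p + q * e22 A)).
  exists (mdet P + r * r * mdet B - r * mtr (mmul B P)).
  unfold P, p, q, r; clear P p q r. mat_unfold. ring.
Qed.

Lemma mdet_bracket_trace A B : mdet A = 1 -> mdet B = 1 -> mtr B = mtr A ->
  mdet (mbracket A B) = (2 - mtr (mmul A B)) * (mtr (mmul A B) + 2 - mtr A * mtr A).
Proof.
  intros hA hB hAB.
  assert (Fricke : - mdet (mbracket A B) =
    mtr A * mtr A * mdet B + mtr B * mtr B * mdet A + mtr (mmul A B) * mtr (mmul A B)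
    - mtr A * mtr B * mtr (mmul A B) - 4 * mdet A * mdet B) by (mat_unfold; ring).
  rewrite hA, hB, hAB in Fricke.
  rewrite <- (Z.opp_involutive (mdet _)), Fricke. ring.
Qed.

Lemma Z_unit_factors x y : x * y = 1 \/ x * y = -1 -> (x = 1 \/ x = -1) /\ (y = 1 \/ y = -1).
Proof.
  intros [E | E].
  - split; [apply (Z.eq_mul_1 x y) | apply (Z.eq_mul_1 y x)]; lia.
  - split; [apply (Z.eq_mul_1 x (- y)) | apply (Z.eq_mul_1 y (- x))]; lia.
Qed.

Lemma square_eq4_of_unit_product s t :
  (2 - s) * (s + 2 - t * t) = 1 \/ (2 - s) * (s + 2 - t * t) = -1 -> t * t = 4.
Proof.
  intros E. apply Z_unit_factors in E.
  assert (Hsq : t * t = 2 \/ t * t = 4 \/ t * t = 6) by lia.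
  assert (Ht : t = -2 \/ t = -1 \/ t = 0 \/ t = 1 \/ t = 2 \/ 3 <= t \/ t <= -3) by lia.
  destruct Ht as [-> | [-> | [-> | [-> | [-> | Ht]]]]]; nia.
Qed.

Definition U_mat : mat := Mat 1 (-1) 0 1.
Definition L_mat : mat := Mat 1 0 (-1) 1.

Fixpoint mword (B : list bool) : mat :=
  match B with [] => mI | b :: B => mmul (if b then U_mat else L_mat) (mword B) end.

Lemma mdet_mword B : mdet (mword B) = 1.
Proof.
  induction B as [|b B IH]; [reflexivity|].
  cbn. rewrite mdet_mul, IH. destruct b; reflexivity.
Qed.

Lemma mword_sign_pattern B :
  1 <= e11 (mword B) /\ 1 <= e22 (mword B) /\ e12 (mword B) <= 0 /\ e21 (mword B) <= 0 /\
  (In true B -> e12 (mword B) <= -1) /\ (In false B -> e21 (mword B) <= -1).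
Proof.
  induction B as [|b B IH]; cbn [mword In].
  - cbn. intuition lia.
  - destruct (mword B) as [a1 a2 a3 a4]. cbn in IH.
    destruct b; unfold mmul, U_mat, L_mat; cbn [e11 e12 e21 e22]; intuition (try discriminate; lia).
Qed.

(* [a d - b c = 1] with [b, c <= -1] forces [a d >= 2]. *)
Lemma mword_mixed_trace B : In true B -> In false B -> 3 <= mtr (mword B).
Proof.
  intros hT hF. pose proof (mdet_mword B) as hdet.
  destruct (mword_sign_pattern B) as (h11 & h22 & h12 & h21 & hU & hL).
  specialize (hU hT). specialize (hL hF).
  unfold mdet, mtr in *. nia.
Qed.

Definition S_mat : mat := Mat 0 (-1) 1 0.
Definition D_mat : mat := Mat 1 (-1) 1 0.
Definition S_SL2Z : SL2Z := exist _ S_mat eq_refl.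
Definition D_SL2Z : SL2Z := exist _ D_mat eq_refl.

Lemma SL2Z_trefoil_relation :
  gmul SL2Z_group S_SL2Z S_SL2Z = gmul SL2Z_group D_SL2Z (gmul SL2Z_group D_SL2Z D_SL2Z).
Proof. apply SL2Z_eq. reflexivity. Qed.

Section Trefoil.
Context {G : Type} (SG : group G) (c d : G).
Hypothesis hrel : gmul SG c c = gmul SG d (gmul SG d d).
Hypothesis hgen : generates SG c d.
Context (f : G -> SL2Z) (hf : is_hom SG SL2Z_group f) (fc : f c = S_SL2Z) (fd : f d = D_SL2Z).

Local Notation "x * y" := (gmul SG x y) : group_scope.
Local Notation "x ^-1" := (ginv SG x) (at level 3) : group_scope.
Local Notation one := (gone SG).
Local Open Scope group_scope.

Definition rho (x : G) : mat := proj1_sig (f x).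

Lemma rho_mul x y : rho (x * y) = mmul (rho x) (rho y).
Proof. unfold rho. rewrite hf. reflexivity. Qed.

Lemma rho1 : rho one = mI.
Proof. unfold rho. rewrite (is_hom1 _ _ f hf). reflexivity. Qed.

Lemma rhoV x : rho x^-1 = madj (rho x).
Proof. unfold rho. rewrite (is_homV _ _ f hf). reflexivity. Qed.

Lemma mdet_rho x : mdet (rho x) = 1.
Proof. exact (proj2_sig (f x)). Qed.

Lemma rho_c : rho c = S_mat.
Proof. unfold rho. rewrite fc. reflexivity. Qed.

Lemma rho_d : rho d = D_mat.
Proof. unfold rho. rewrite fd. reflexivity. Qed.

Lemma mtr_rho_conj h x y : h * x = y * h -> mtr (rho y) = mtr (rho x).
Proof.
  intros E. apply (mtr_conj _ _ (rho h)); [apply mdet_rho|].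
  rewrite <- !rho_mul, E. reflexivity.
Qed.

Lemma rho_in_mspan a b x : in_gen SG a b x -> in_mspan (rho a) (rho b) (rho x).
Proof.
  induction 1.
  - rewrite rho1. apply in_mspan1.
  - apply in_mspan_l.
  - apply in_mspan_r.
  - rewrite rho_mul. apply in_mspan_mul; assumption.
  - rewrite rhoV. apply in_mspan_adj; assumption.
Qed.

Lemma conjugate_generators_parabolic alpha beta :
  conjugate SG alpha beta -> generates SG alpha beta -> parabolic (rho alpha).
Proof.
  intros [g Eb] hab.
  assert (htr : mtr (rho beta) = mtr (rho alpha)).
  { apply (mtr_rho_conj g). rewrite Eb, <- gmulA, gmulVg, gmulg1. reflexivity. }
  destruct (mdet_bracket_mspan _ _ _ _ (rho_in_mspan _ _ _ (hab c)) (rho_in_mspan _ _ _ (hab d)))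
    as [q Eq].
  rewrite rho_c, rho_d in Eq. change (mdet (mbracket S_mat D_mat)) with (-1) in Eq.
  assert (hunit : mdet (mbracket (rho alpha) (rho beta)) = 1 \/
                  mdet (mbracket (rho alpha) (rho beta)) = -1).
  { refine (proj1 (Z_unit_factors _ (- q) _)). left. lia. }
  rewrite (mdet_bracket_trace _ _ (mdet_rho _) (mdet_rho _) htr) in hunit.
  exact (square_eq4_of_unit_product _ _ hunit).
Qed.

Definition z : G := c * c.
Definition zpow (w : G) : Prop := in_gen SG z z w.

Lemma zpow_z : zpow z.
Proof. apply gen_a. Qed.

Lemma zpow_mulz w : zpow w -> zpow (w * z).
Proof. intros hw. apply gen_mul; [exact hw | exact zpow_z]. Qed.

Lemma z_central x : z * x = x * z.
Proof.
  induction (hgen x).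
  - rewrite gmul1g, gmulg1. reflexivity.
  - unfold z. gassoc. reflexivity.
  - unfold z. rewrite hrel. gassoc. reflexivity.
  - apply commuteM; assumption.
  - apply commuteV; assumption.
Qed.

Lemma zpow_central w x : zpow w -> w * x = x * w.
Proof.
  induction 1 as [| | |u v _ Hu _ Hv|u _ Hu].
  - rewrite gmul1g, gmulg1. reflexivity.
  - apply z_central.
  - apply z_central.
  - rewrite <- gmulA, Hv, gmulA, Hu, gmulA. reflexivity.
  - symmetry. apply commuteV. symmetry. exact Hu.
Qed.

Lemma zpow_swap w x y : zpow w -> x * (w * y) = w * (x * y).
Proof. intros hw. rewrite gmulA, <- (zpow_central w x hw), gmulA. reflexivity. Qed.

Lemma rho_zpow w : zpow w -> rho w = mI \/ rho w = mopp mI.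
Proof.
  induction 1 as [| | |u v _ Hu _ Hv|u _ Hu].
  - left. exact rho1.
  - right. unfold z. rewrite rho_mul, rho_c. reflexivity.
  - right. unfold z. rewrite rho_mul, rho_c. reflexivity.
  - rewrite rho_mul.
    destruct Hu as [-> | ->], Hv as [-> | ->]; [left|right|right|left]; reflexivity.
  - rewrite rhoV. destruct Hu as [-> | ->]; [left|right]; reflexivity.
Qed.

Lemma parabolic_zpow_mul w x : zpow w -> parabolic (rho (w * x)) <-> parabolic (rho x).
Proof.
  intros hw. unfold parabolic. rewrite rho_mul.
  enough (E : (mtr (mmul (rho w) (rho x)) * mtr (mmul (rho w) (rho x))
               = mtr (rho x) * mtr (rho x))%Z) by (rewrite E; reflexivity).
  destruct (rho_zpow w hw) as [-> | ->]; generalize (rho x); intros X; mat_unfold; ring.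
Qed.

Definition dpow (j : nat) : G := match j with O => one | 1%nat => d | _ => d * d end.
Definition cpow (e : bool) : G := if e then c else one.
Definition block (b : bool) : G := if b then c * (d * d) else c * d.

Fixpoint blocks (B : list bool) : G :=
  match B with [] => one | b :: B => block b * blocks B end.

Definition nf (w : G) (j : nat) (B : list bool) (e : bool) : G :=
  w * (dpow j * (blocks B * cpow e)).

Definition has_nf (x : G) : Prop := exists w j B e, zpow w /\ x = nf w j B e.

Lemma has_nf_zpow_mul w x : zpow w -> has_nf x -> has_nf (w * x).
Proof.
  intros hw (w' & j & B & e & hw' & ->). exists (w * w'), j, B, e.
  split; [apply gen_mul; assumption|]. unfold nf. gassoc. reflexivity.
Qed.

Lemma has_nf_c_mul x : has_nf x -> has_nf (c * x).
Proof.
  intros (w & j & B & e & hw & ->). unfold nf. rewrite (zpow_swap w _ _ hw).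
  destruct j as [|[|j]]; cbn [dpow].
  - destruct B as [|b B]; [destruct e|].
    + exists (w * z), O, [], false. split; [apply zpow_mulz, hw|].
      unfold nf, z. cbn. gassoc. reflexivity.
    + exists w, O, [], true. split; [exact hw|]. unfold nf. cbn. gassoc. reflexivity.
    + exists (w * z), (if b then 2 else 1)%nat, B, e. split; [apply zpow_mulz, hw|].
      unfold nf, z. destruct b; cbn; gassoc; reflexivity.
  - exists w, O, (false :: B), e. split; [exact hw|]. unfold nf. cbn. gassoc. reflexivity.
  - exists w, O, (true :: B), e. split; [exact hw|]. unfold nf. cbn. gassoc. reflexivity.
Qed.

Lemma has_nf_d_mul x : has_nf x -> has_nf (d * x).
Proof.
  intros (w & j & B & e & hw & ->). unfold nf. rewrite (zpow_swap w _ _ hw).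
  destruct j as [|[|j]]; cbn [dpow].
  - exists w, 1%nat, B, e. split; [exact hw|]. unfold nf. cbn. gassoc. reflexivity.
  - exists w, 2%nat, B, e. split; [exact hw|]. unfold nf. cbn. gassoc. reflexivity.
  - exists (w * z), O, B, e. split; [apply zpow_mulz, hw|].
    unfold nf, z. cbn. rewrite hrel. gassoc. reflexivity.
Qed.

Lemma cV_eq : c^-1 = z^-1 * c.
Proof. unfold z. rewrite ginvM, <- gmulA, gmulVg, gmulg1. reflexivity. Qed.

Lemma dV_eq : d^-1 = z^-1 * (d * d).
Proof. unfold z. rewrite hrel, !ginvM. gassoc. rewrite gmulKg, gmulVg, gmulg1. reflexivity. Qed.

Lemma has_nf_all x : has_nf x.
Proof.
  assert (hmul : (forall y, has_nf y -> has_nf (x * y)) /\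
                 (forall y, has_nf y -> has_nf (x^-1 * y))).
  { induction (hgen x) as [| | |x1 x2 _ [H1 H1'] _ [H2 H2']|x1 _ [H1 H1']];
      split; intros y hy.
    - rewrite gmul1g. exact hy.
    - rewrite ginv1, gmul1g. exact hy.
    - apply has_nf_c_mul, hy.
    - rewrite cV_eq, <- gmulA. apply has_nf_zpow_mul; [apply gen_inv, zpow_z|].
      apply has_nf_c_mul, hy.
    - apply has_nf_d_mul, hy.
    - rewrite dV_eq, <- !gmulA. apply has_nf_zpow_mul; [apply gen_inv, zpow_z|].
      apply has_nf_d_mul, has_nf_d_mul, hy.
    - rewrite <- gmulA. apply H1, H2, hy.
    - rewrite ginvM, <- gmulA. apply H2', H1', hy.
    - apply H1', hy.
    - rewrite ginvK. apply H1, hy. }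
  rewrite <- (gmulg1 SG x). apply (proj1 hmul).
  exists one, O, [], false. split; [apply gen_one|]. unfold nf. cbn. gassoc. reflexivity.
Qed.

Local Notation mu := (meridian SG c d).
Local Notation lambda := (longitude SG c d).

Definition in_peripheral (x : G) : Prop := in_gen SG mu lambda x.

Lemma z_in_peripheral : in_peripheral z.
Proof.
  assert (E : z = lambda * npow SG 6 mu).
  { unfold longitude. rewrite <- gmulA, gmulVg, gmulg1. reflexivity. }
  rewrite E. apply gen_mul; [apply gen_b|].
  generalize 6%nat. induction n; [apply gen_one | apply gen_mul; [apply gen_a | exact IHn]].
Qed.

Lemma zpow_in_peripheral w : zpow w -> in_peripheral w.
Proof.
  induction 1;
    [apply gen_one | apply z_in_peripheral | apply z_in_peripheral
    | apply gen_mul; assumption | apply gen_inv; assumption].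
Qed.

Lemma cd_in_peripheral : in_peripheral (c * d).
Proof.
  assert (E : c * d = z * mu^-1).
  { unfold z, meridian. rewrite ginvM, ginvK. gassoc. rewrite gmulKVg. reflexivity. }
  rewrite E. apply gen_mul; [apply z_in_peripheral | apply gen_inv, gen_a].
Qed.

Lemma cdd_conj : c * (d * d) = c * (z * mu * c^-1).
Proof.
  unfold meridian. gassoc. rewrite gmulgV, gmulg1.
  unfold z. rewrite hrel. gassoc. rewrite gmulgV, gmulg1. reflexivity.
Qed.

Lemma blocks_in_peripheral B : ~ In true B -> in_peripheral (blocks B).
Proof.
  induction B as [|b B IH]; intros hB; cbn.
  - apply gen_one.
  - destruct b; [contradict hB; left; reflexivity|].
    apply gen_mul; [apply cd_in_peripheral | apply IH]. intros h. apply hB. right. exact h.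
Qed.

Lemma blocks_conj_in_peripheral B : ~ In false B ->
  exists y, in_peripheral y /\ blocks B = c * (y * c^-1).
Proof.
  induction B as [|b B IH]; intros hB; cbn.
  - exists one. split; [apply gen_one|]. rewrite gmul1g, gmulgV. reflexivity.
  - destruct b; [|contradict hB; left; reflexivity].
    destruct IH as [y [hy ->]]; [intros h; apply hB; right; exact h|].
    exists (z * mu * y). split.
    + apply gen_mul; [apply gen_mul; [apply z_in_peripheral | apply gen_a] | exact hy].
    + cbn. rewrite cdd_conj. gassoc. rewrite gmulKg. reflexivity.
Qed.

Lemma rho_blocks B : rho (blocks B) = mword B \/ rho (blocks B) = mopp (mword B).
Proof.
  induction B as [|b B IH]; cbn [blocks mword].
  - left. exact rho1.
  - rewrite rho_mul. unfold block.
    destruct b; rewrite !rho_mul, rho_c, rho_d;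
    destruct IH as [-> | ->]; [right|left|right|left];
    generalize (mword B); intros X; unfold S_mat, D_mat, U_mat, L_mat; mat_unfold; f_equal; ring.
Qed.

Lemma mixed_blocks_not_parabolic B : In true B -> In false B -> ~ parabolic (rho (blocks B)).
Proof.
  intros hT hF hpar. pose proof (mword_mixed_trace B hT hF) as htr.
  assert (hpar' : parabolic (mword B)).
  { destruct (rho_blocks B) as [E | E]; rewrite E in hpar; [|apply parabolic_opp]; exact hpar. }
  unfold parabolic in hpar'. nia.
Qed.

Definition peripheral_if_parabolic (x : G) : Prop :=
  parabolic (rho x) -> peripheral SG c d x.

Lemma peripheral_if_parabolic_conj_imp h x y :
  h * x = y * h -> peripheral_if_parabolic x -> peripheral_if_parabolic y.
Proof.
  intros E hx hpar. unfold parabolic in hpar. rewrite (mtr_rho_conj h x y E) in hpar.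
  destruct (hx hpar) as [g [p [hp Ex]]]. exists (h * g), p. split; [exact hp|].
  assert (Ey : y = h * x * h^-1) by (rewrite E, <- gmulA, gmulgV, gmulg1; reflexivity).
  rewrite Ey, Ex, ginvM. gassoc. reflexivity.
Qed.

Lemma peripheral_if_parabolic_conj h x y :
  h * x = y * h -> peripheral_if_parabolic x <-> peripheral_if_parabolic y.
Proof.
  intros E. split; [apply (peripheral_if_parabolic_conj_imp h x y E)|].
  apply (peripheral_if_parabolic_conj_imp h^-1).
  rewrite <- (gmulg1 SG y), <- (gmulgV SG h), (gmulA SG y h), <- E. gassoc.
  rewrite gmulKg. reflexivity.
Qed.

Lemma blocks_peripheral_if_parabolic w B : zpow w -> peripheral_if_parabolic (w * blocks B).
Proof.
  intros hw hpar. apply (proj1 (parabolic_zpow_mul w _ hw)) in hpar.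
  destruct (in_dec Bool.bool_dec true B) as [hT | hT].
  - destruct (in_dec Bool.bool_dec false B) as [hF | hF].
    + exfalso. exact (mixed_blocks_not_parabolic B hT hF hpar).
    + destruct (blocks_conj_in_peripheral B hF) as [y [hy ->]]. exists c, (w * y). split.
      * apply gen_mul; [apply zpow_in_peripheral, hw | exact hy].
      * rewrite <- (zpow_swap w c _ hw). gassoc. reflexivity.
  - exists one, (w * blocks B). split.
    + apply gen_mul; [apply zpow_in_peripheral, hw | apply blocks_in_peripheral, hT].
    + rewrite ginv1, gmul1g, gmulg1. reflexivity.
Qed.

Lemma not_parabolic_c : ~ parabolic (rho c).
Proof. rewrite rho_c. discriminate. Qed.

Lemma not_parabolic_dpow j : j <> O -> ~ parabolic (rho (dpow j)).
Proof.
  destruct j as [|[|j]]; intros hj; [contradiction | |]; cbn [dpow];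
  rewrite ?rho_mul, rho_d; discriminate.
Qed.

Lemma blocks_rcons B b : blocks (B ++ [b]) = blocks B * block b.
Proof.
  induction B as [|b' B IH]; cbn.
  - rewrite gmul1g, gmulg1. reflexivity.
  - rewrite IH, gmulA. reflexivity.
Qed.

Lemma zmul_shift w x y : w * (x * (z * y)) = w * z * (x * y).
Proof. rewrite (gmulA SG x z), <- (z_central x). gassoc. reflexivity. Qed.

Lemma block_true_d : block true * d = z * c.
Proof. cbn. rewrite z_central. unfold z. gassoc. rewrite hrel. reflexivity. Qed.

Lemma block_false_dd : block false * (d * d) = z * c.
Proof. cbn. rewrite z_central. unfold z. gassoc. rewrite hrel. reflexivity. Qed.

Lemma block_true_dd : block true * (d * d) = z * block false.
Proof.
  cbn. rewrite (gmulA SG z c d), (z_central c). unfold z. rewrite hrel. gassoc. reflexivity.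
Qed.

Lemma nf_true_peripheral_if_parabolic B :
  (forall B', (length B' < length B)%nat ->
     forall w j e, zpow w -> peripheral_if_parabolic (nf w j B' e)) ->
  forall w j, zpow w -> peripheral_if_parabolic (nf w j B true).
Proof.
  intros IH w j hw.
  (* Conjugating by c moves the trailing c to the front, where it absorbs a block. *)
  apply (peripheral_if_parabolic_conj c (nf w j B true) (w * (c * (dpow j * blocks B)))).
  { unfold nf. cbn [cpow]. rewrite (zpow_swap w c _ hw). gassoc. reflexivity. }
  destruct j as [|[|j]]; cbn [dpow].
  - destruct B as [|b B].
    + intros hpar. exfalso. apply not_parabolic_c.
      cbn [blocks] in hpar. rewrite gmul1g, gmulg1 in hpar.
      exact (proj1 (parabolic_zpow_mul w _ hw) hpar).
    + replace (w * (c * (one * blocks (b :: B)))) with (nf (w * z) (if b then 2 else 1)%nat B false)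
        by (unfold nf, z; destruct b; cbn; gassoc; reflexivity).
      apply IH; [cbn; lia | apply zpow_mulz, hw].
  - replace (w * (c * (d * blocks B))) with (w * blocks (false :: B))
      by (cbn; gassoc; reflexivity).
    apply blocks_peripheral_if_parabolic, hw.
  - replace (w * (c * (d * d * blocks B))) with (w * blocks (true :: B))
      by (cbn; gassoc; reflexivity).
    apply blocks_peripheral_if_parabolic, hw.
Qed.

Lemma nf_false_peripheral_if_parabolic B :
  (forall B', (length B' < length B)%nat ->
     forall w j e, zpow w -> peripheral_if_parabolic (nf w j B' e)) ->
  forall w j, zpow w -> peripheral_if_parabolic (nf w j B false).
Proof.
  intros IH w j hw.
  destruct j as [|j].
  { replace (nf w O B false) with (w * blocks B) by (unfold nf; cbn; gassoc; reflexivity).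
    apply blocks_peripheral_if_parabolic, hw. }
  destruct B as [|b B _] using rev_ind.
  { intros hpar. exfalso. apply (not_parabolic_dpow (S j)); [discriminate|].
    unfold nf in hpar. cbn [blocks cpow] in hpar. rewrite !gmulg1 in hpar.
    exact (proj1 (parabolic_zpow_mul w _ hw) hpar). }
  (* Conjugating by d^j moves it to the end, where it merges with the last block. *)
  apply (peripheral_if_parabolic_conj (dpow (S j)) (w * (blocks B * (block b * dpow (S j))))
           (nf w (S j) (B ++ [b]) false)).
  { unfold nf. cbn [cpow]. rewrite blocks_rcons, (zpow_swap w (dpow (S j)) _ hw).
    gassoc. reflexivity. }
  assert (hlen : (length B < length (B ++ [b]))%nat) by (rewrite length_app; cbn; lia).
  assert (IHB : forall w, zpow w -> peripheral_if_parabolic (w * (blocks B * c))).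
  { intros w' hw'.
    replace (w' * (blocks B * c)) with (nf w' O B true) by (unfold nf; cbn; gassoc; reflexivity).
    apply IH; assumption. }
  destruct j as [|j]; destruct b; cbn [dpow].
  - rewrite block_true_d, zmul_shift. apply IHB, zpow_mulz, hw.
  - replace (w * (blocks B * (block false * d))) with (w * blocks (B ++ [true]))
      by (rewrite blocks_rcons; cbn; gassoc; reflexivity).
    apply blocks_peripheral_if_parabolic, hw.
  - rewrite block_true_dd, zmul_shift, <- blocks_rcons.
    apply blocks_peripheral_if_parabolic, zpow_mulz, hw.
  - rewrite block_false_dd, zmul_shift. apply IHB, zpow_mulz, hw.
Qed.

Lemma nf_peripheral_if_parabolic B : forall w j e, zpow w -> peripheral_if_parabolic (nf w j B e).
Proof.
  induction B as [B IH] using (Wf_nat.induction_ltof1 _ (@length bool)).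
  intros w j [|] hw;
    [apply nf_true_peripheral_if_parabolic | apply nf_false_peripheral_if_parabolic]; assumption.
Qed.

Lemma peripheral_of_parabolic x : parabolic (rho x) -> peripheral SG c d x.
Proof.
  destruct (has_nf_all x) as (w & j & B & e & hw & ->).
  apply nf_peripheral_if_parabolic, hw.
Qed.

End Trefoil.

Theorem mainTheorem9 (G : Type) (SG : group G) (c d : G)
  (hG : trefoil_presentation SG c d) (alpha beta : G) :
  conjugate SG alpha beta ->
  generates SG alpha beta ->
  peripheral SG c d alpha /\ peripheral SG c d beta.
Proof.
  intros hconj hab.
  pose proof (trefoil_generates SG c d hG) as hcd.
  destruct hG as [hrel hU].
  destruct (hU _ SL2Z_group S_SL2Z D_SL2Z SL2Z_trefoil_relation) as [[f [hf [fc fd]]] _].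
  split; apply (peripheral_of_parabolic SG c d hrel hcd f hf fc fd).
  - exact (conjugate_generators_parabolic SG c d f hf fc fd alpha beta hconj hab).
  - exact (conjugate_generators_parabolic SG c d f hf fc fd beta alpha
             (conjugate_sym SG _ _ hconj) (generates_sym SG _ _ hab)).
Qed.
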